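(* Let $k\ge0$ be real. For $x=e^{i\theta}$ on the unit circle with $\cos\theta\ne0$, set $$\Delta_k(x)=k^2-16\cos^2\theta\,(3-4\cos^2\theta),\qquad y_{1}(x)=\frac{k+\sqrt{\Delta_k(x)}}{4\cos\theta},\qquad y_{2}(x)=\frac{k-\sqrt{\Delta_k(x)}}{4\cos\theta}.$$ Then: (i) If $k\ge3$ then $\Delta_k(x)\ge0$, so that $y_1(x)$ and $y_2(x)$ are real. (ii) If $0\le k<3$ then $y_1(x)$ and $y_2(x)$ are complex conjugate to each other whenever $$\frac{3-\sqrt{9-k^2}}8<\cos^2\theta<\frac{3+\sqrt{9-k^2}}8,$$ and in this case $|y_1(x)|=|y_2(x)|=|3-4\cos^2\theta|^{1/2}$. Furthermore, $|y_1(x)|=|y_2(x)|>1$ holds if and only if $\frac{3-\sqrt{9-k^2}}8<\cos^2\theta<\frac12$ when $0\le k<2\sqrt2$, and if and only if $\frac{3-\sqrt{9-k^2}}8<\cos^2\theta<\frac{3+\sqrt{9-k^2}}8$ when $2\sqrt2\le k<3$.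
   Context: $y_1(x),y_2(x)$ are the two roots in $y$ of $(x+x^{-1})y^2-ky-(x^3+x^{-3})=0$ (which equals $-y^3R_k(x/y,1/(xy))$ for $R_k(x,y)=y^3-y+x^3-x+kxy$); their product is $3-4\cos^2\theta$. Here $\sqrt{\cdot}$ is the principal square root. *)

From Stdlib Require Import Reals.
From Coquelicot Require Import Coquelicot.
Open Scope R_scope.

Definition psqrtR (a : R) : C :=
  if Rle_dec 0 a then RtoC (sqrt a) else (0, sqrt (- a)).

Definition DeltaK (k theta : R) : R :=
  k ^ 2 - 16 * (cos theta) ^ 2 * (3 - 4 * (cos theta) ^ 2).

Definition y1 (k theta : R) : C :=
  Cdiv (Cplus (RtoC k) (psqrtR (DeltaK k theta))) (RtoC (4 * cos theta)).

Definition y2 (k theta : R) : C :=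
  Cdiv (Cminus (RtoC k) (psqrtR (DeltaK k theta))) (RtoC (4 * cos theta)).

(* Writing c = cos^2 theta, Delta_k = (k^2 - 9) + (8c - 3)^2, so Delta_k >= 0 for k >= 3,
   and Delta_k < 0 exactly when |8c - 3| < sqrt (9 - k^2).  In the latter case the roots
   are (k +- i sqrt (-Delta_k)) / (4 cos theta), complex conjugate, with squared modulus
   (k^2 - Delta_k) / (16 c) = 3 - 4c.  Hence |y_i| > 1 iff c < 1/2, and the upper end
   (3 + sqrt (9 - k^2)) / 8 of the interval lies below 1/2 iff sqrt (9 - k^2) <= 1, i.e.
   iff k >= 2 sqrt 2. *)

From Stdlib Require Import Reals Lra Psatz.
From Coquelicot Require Import Coquelicot.
Open Scope R_scope.

Lemma DeltaK_square_form (k theta : R) :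
  DeltaK k theta = k ^ 2 - 9 + (8 * cos theta ^ 2 - 3) ^ 2.
Proof. unfold DeltaK; ring. Qed.

Lemma DeltaK_nonneg (k theta : R) : 3 <= k -> 0 <= DeltaK k theta.
Proof.
  intros Hk. rewrite DeltaK_square_form.
  assert (0 <= (8 * cos theta ^ 2 - 3) ^ 2) by apply pow2_ge_0.
  nra.
Qed.

Lemma DeltaK_neg (k theta : R) :
  (3 - sqrt (9 - k ^ 2)) / 8 < cos theta ^ 2 < (3 + sqrt (9 - k ^ 2)) / 8 ->
  DeltaK k theta < 0.
Proof.
  intros [Hlo Hhi]. rewrite DeltaK_square_form.
  set (s := sqrt (9 - k ^ 2)) in *.
  destruct (Rle_lt_dec (9 - k ^ 2) 0) as [Hneg | Hpos].
  - unfold s in *; rewrite sqrt_neg_0 in Hlo, Hhi by exact Hneg; lra.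
  - assert (Hs : s * s = 9 - k ^ 2) by (apply sqrt_sqrt; lra).
    assert (0 <= s) by apply sqrt_pos.
    nra.
Qed.

Lemma three_sub_4cos2_pos (k theta : R) :
  cos theta <> 0 -> DeltaK k theta < 0 -> 0 < 3 - 4 * cos theta ^ 2.
Proof.
  unfold DeltaK; intros Hc HD.
  assert (0 < cos theta ^ 2) by (apply pow2_gt_0; exact Hc).
  nra.
Qed.

Lemma psqrtR_nonneg (a : R) : 0 <= a -> psqrtR a = RtoC (sqrt a).
Proof. unfold psqrtR; intros Ha; destruct (Rle_dec 0 a); [reflexivity | lra]. Qed.

Lemma psqrtR_neg (a : R) : a < 0 -> psqrtR a = (0, sqrt (- a)).
Proof. unfold psqrtR; intros Ha; destruct (Rle_dec 0 a); [lra | reflexivity]. Qed.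

Lemma Cdiv_RtoC (a b d : R) : d <> 0 -> Cdiv (a, b) (RtoC d) = (a / d, b / d).
Proof. intros Hd; unfold Cdiv, Cinv, Cmult, RtoC; simpl; f_equal; field; exact Hd. Qed.

Lemma y1_real (k theta : R) : 0 <= DeltaK k theta -> Complex.Im (y1 k theta) = 0.
Proof.
  intros HD; unfold y1; rewrite psqrtR_nonneg by exact HD.
  unfold Cdiv, Cinv, Cmult, Cplus, RtoC; simpl; unfold Rdiv; ring.
Qed.

Lemma y2_real (k theta : R) : 0 <= DeltaK k theta -> Complex.Im (y2 k theta) = 0.
Proof.
  intros HD; unfold y2; rewrite psqrtR_nonneg by exact HD.
  unfold Cdiv, Cinv, Cmult, Cminus, Cplus, Copp, RtoC; simpl; unfold Rdiv; ring.
Qed.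

Lemma y1_nonreal_form (k theta : R) : DeltaK k theta < 0 -> cos theta <> 0 ->
  y1 k theta = (k / (4 * cos theta), sqrt (- DeltaK k theta) / (4 * cos theta)).
Proof.
  intros HD Hc; unfold y1; rewrite psqrtR_neg by exact HD.
  rewrite <- Cdiv_RtoC by lra.
  f_equal; unfold Cplus, RtoC; simpl; f_equal; ring.
Qed.

Lemma y2_nonreal_form (k theta : R) : DeltaK k theta < 0 -> cos theta <> 0 ->
  y2 k theta = (k / (4 * cos theta), - sqrt (- DeltaK k theta) / (4 * cos theta)).
Proof.
  intros HD Hc; unfold y2; rewrite psqrtR_neg by exact HD.
  rewrite <- Cdiv_RtoC by lra.
  f_equal; unfold Cminus, Cplus, Copp, RtoC; simpl; f_equal; ring.
Qed.

Lemma y2_Cconj_y1 (k theta : R) : DeltaK k theta < 0 -> cos theta <> 0 ->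
  y2 k theta = Cconj (y1 k theta).
Proof.
  intros HD Hc; rewrite y1_nonreal_form, y2_nonreal_form by assumption.
  unfold Cconj; simpl; f_equal; field; lra.
Qed.

(* |y1|^2 = (k^2 + (-Delta_k)) / (4 cos theta)^2, and k^2 - Delta_k = 16 c (3 - 4c) is
   (4 cos theta)^2 times the product of the roots. *)
Lemma Cmod_y1 (k theta : R) : DeltaK k theta < 0 -> cos theta <> 0 ->
  Cmod (y1 k theta) = sqrt (Rabs (3 - 4 * cos theta ^ 2)).
Proof.
  intros HD Hc.
  rewrite y1_nonreal_form by assumption.
  rewrite Rabs_pos_eq by (apply Rlt_le; apply (three_sub_4cos2_pos k); assumption).
  assert (Hq : sqrt (- DeltaK k theta) ^ 2 = - DeltaK k theta)
    by (rewrite <- Rsqr_pow2; apply Rsqr_sqrt; lra).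
  unfold Cmod; simpl; f_equal.
  field_simplify; [| lra].
  rewrite Hq; unfold DeltaK; field; lra.
Qed.

Lemma Cmod_y2 (k theta : R) : DeltaK k theta < 0 -> cos theta <> 0 ->
  Cmod (y2 k theta) = sqrt (Rabs (3 - 4 * cos theta ^ 2)).
Proof.
  intros HD Hc; rewrite y2_Cconj_y1, Cmod_conj by assumption.
  exact (Cmod_y1 k theta HD Hc).
Qed.

Lemma one_lt_sqrt (x : R) : 1 < sqrt x <-> 1 < x.
Proof.
  split; intros H.
  - destruct (Rlt_or_le 1 x) as [Hx | Hx]; [exact Hx |].
    destruct (Rle_lt_dec x 0) as [Hx0 | Hx0].
    + rewrite sqrt_neg_0 in H by exact Hx0; lra.
    + assert (sqrt x <= sqrt 1) by (apply sqrt_le_1_alt; exact Hx).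
      rewrite sqrt_1 in *; lra.
  - rewrite <- sqrt_1; apply sqrt_lt_1_alt; lra.
Qed.

Lemma one_lt_sqrt_nine_sub_sq (k : R) : 0 <= k ->
  1 < sqrt (9 - k ^ 2) <-> k < 2 * sqrt 2.
Proof.
  intros Hk.
  assert (H2 : sqrt 2 * sqrt 2 = 2) by (apply sqrt_sqrt; lra).
  assert (0 <= sqrt 2) by apply sqrt_pos.
  rewrite one_lt_sqrt; split; intros Hlt; nra.
Qed.

Theorem lemma1 (k theta : R) :
  0 <= k -> cos theta <> 0 ->
  (3 <= k ->
     0 <= DeltaK k theta /\ Complex.Im (y1 k theta) = 0 /\ Complex.Im (y2 k theta) = 0) /\
  (k < 3 ->
     (3 - sqrt (9 - k ^ 2)) / 8 < (cos theta) ^ 2 < (3 + sqrt (9 - k ^ 2)) / 8 ->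
     y2 k theta = Cconj (y1 k theta) /\
     Cmod (y1 k theta) = sqrt (Rabs (3 - 4 * (cos theta) ^ 2)) /\
     Cmod (y2 k theta) = sqrt (Rabs (3 - 4 * (cos theta) ^ 2)) /\
     (k < 2 * sqrt 2 ->
        (Cmod (y1 k theta) = Cmod (y2 k theta) /\ 1 < Cmod (y1 k theta) <->
         (3 - sqrt (9 - k ^ 2)) / 8 < (cos theta) ^ 2 < 1 / 2)) /\
     (2 * sqrt 2 <= k ->
        (Cmod (y1 k theta) = Cmod (y2 k theta) /\ 1 < Cmod (y1 k theta) <->
         (3 - sqrt (9 - k ^ 2)) / 8 < (cos theta) ^ 2 < (3 + sqrt (9 - k ^ 2)) / 8))).
Proof.
  intros Hk Hc; split.
  - intros Hk3; pose proof (DeltaK_nonneg k theta Hk3) as HD.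
    split; [exact HD | split; [apply y1_real | apply y2_real]; exact HD].
  - intros _ Hint.
    pose proof (DeltaK_neg k theta Hint) as HD.
    pose proof (three_sub_4cos2_pos k theta Hc HD) as Hpos.
    rewrite (Cmod_y1 k theta HD Hc), (Cmod_y2 k theta HD Hc).
    rewrite Rabs_pos_eq, one_lt_sqrt by lra.
    pose proof (one_lt_sqrt_nine_sub_sq k Hk) as Hthreshold.
    split; [exact (y2_Cconj_y1 k theta HD Hc) |].
    do 2 (split; [reflexivity |]).
    split; intros Hk2.
    + apply Hthreshold in Hk2.
      split; [intros [_ Hc2]; lra | intros [_ Hc2]; split; [reflexivity | lra]].
    + assert (Hs : ~ 1 < sqrt (9 - k ^ 2)) by (rewrite Hthreshold; lra).
      split; [intros [_ Hc2]; lra | intros _; split; [reflexivity | lra]].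
Qed.
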